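(* Let $(A,\mathfrak{m})$ be a local ring and let $A\subset B$ be an integral extension of rings. Let $R(B)$ denote the Jacobson radical of $B$, and set $A' = A + R(B)\subset B$ and $\mathfrak{m}' = R(B)$. For each maximal ideal $\mathfrak{n}_i$ of $B$ let $\omega_i\colon A/\mathfrak{m}\to B/\mathfrak{n}_i$ be the canonical homomorphism. Then: (1) $(A',\mathfrak{m}')$ is a local ring and the canonical homomorphism $A/\mathfrak{m}\to A'/\mathfrak{m}'$ is an isomorphism; (2) $A'$ is the largest intermediate local ring with this property: if $C$ is a ring with $A\subset C\subset B$ which is local with maximal ideal $\mathfrak{n}$ and $A/\mathfrak{m}\cong C/\mathfrak{n}$ (via the canonical map), then $C\subset A'$; (3) an element $b\in B$ lies in $A'$ if and only if (a) for every maximal ideal $\mathfrak{n}_i$ of $B$, the image $b(x_i)$ of $b$ in $B/\mathfrak{n}_i$ lies in $\omega_i(A/\mathfrak{m})$, and (b) $\omega_i^{-1}(b(x_i)) = \omega_j^{-1}(b(x_j))$ for all $i,j$.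
   Context: All rings are commutative with identity. For a maximal ideal $\mathfrak{n}_i$ of $B$ corresponding to a closed point $x_i\in\mathrm{Spec}(B)$, $b(x_i)$ denotes the image of $b$ in the residue field $B/\mathfrak{n}_i$. *)

(* Subrings / ideals are represented as Prop-valued
   predicates on the ambient commutative ring B. *)
From mathcomp Require Import all_boot all_order all_algebra.
Set Implicit Arguments. Unset Strict Implicit. Unset Printing Implicit Defensive.
Import GRing.Theory.
Local Open Scope ring_scope.

Section Defs.
Variable B : comNzRingType.

Definition is_subring (S : B -> Prop) : Prop :=
  [/\ S 1, (forall x y, S x -> S y -> S (x - y)) &
      (forall x y, S x -> S y -> S (x * y))].

Definition is_ideal (S I : B -> Prop) : Prop :=
  [/\ (forall x, I x -> S x), I 0,
      (forall x y, I x -> I y -> I (x + y)) &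
      (forall s x, S s -> I x -> I (s * x))].

Definition is_maximal_ideal (S I : B -> Prop) : Prop :=
  [/\ is_ideal S I, ~ I 1 &
      forall J, is_ideal S J -> (forall x, I x -> J x) ->
        J 1 \/ (forall x, J x -> I x)].

Definition is_local (S m : B -> Prop) : Prop :=
  [/\ is_subring S, is_maximal_ideal S m &
      forall n, is_maximal_ideal S n -> forall x, n x <-> m x].

Definition maxB (n : B -> Prop) : Prop := is_maximal_ideal (fun _ => True) n.

Definition jacobson_radical : B -> Prop := fun b => forall n, maxB n -> n b.

Definition sum_pred (S I : B -> Prop) : B -> Prop :=
  fun b => exists a r, [/\ S a, I r & b = a + r].

Definition integral_over (A : B -> Prop) : Prop :=
  forall b : B, exists p : {poly B},
    [/\ p \is monic, (forall i, A p`_i) & root p b].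

(* For local subrings (A,m) ⊆ (C,n) the canonical map A/m -> C/n,
   a mod m |-> a mod n, is a well-defined isomorphism:
   well-defined (m ⊆ n), injective (A ∩ n ⊆ m), surjective
   (every c ∈ C is congruent mod n to some a ∈ A). *)
Definition canonical_residue_iso (A m C n : B -> Prop) : Prop :=
  [/\ (forall a, A a -> m a -> n a),
      (forall a, A a -> n a -> m a) &
      (forall c, C c -> exists a, A a /\ n (c - a))].
End Defs.

(** Everything rests on lying over for the local ring (A, m): every maximal
    ideal N of B contracts to m.  If a ∈ m but a ∉ N, pick y with a y ≡ 1
    (mod N) and a monic equation y^d + ... + p_0 = 0 over A; multiplying it
    by a^d gives t := Σ p_i a^(d-i) ≡ 0 (mod N), while t ≡ 1 (mod m) is a
    unit of A.  Hence R(B) ∩ A = m, so every element a + r of A + R(B) with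
    a ∉ m is a unit (a^-1 (1 + a^-1 r)^-1), which makes (A + R(B), R(B))
    local with residue field A/m.  Conversely, applying lying over to a local
    C ⊇ A with residue field A/m shows c - a ∈ R(B) whenever c ≡ a (mod n),
    and the pointwise description of A + R(B) is lying over again. *)
From mathcomp Require Import all_boot all_order all_algebra.
From mathcomp Require Import boolp classical_sets ring.
Import GRing.Theory.
Set Implicit Arguments. Unset Strict Implicit.
Local Open Scope ring_scope.

Section SubringsIdeals.
Local Open Scope classical_set_scope.
Variable B : comNzRingType.
Implicit Types (S I K M N : B -> Prop) (x y : B).

Lemma subring1 S : is_subring S -> S 1.
Proof. by case. Qed.

Lemma subringB S x y : is_subring S -> S x -> S y -> S (x - y).
Proof. by case=> _ hB _; apply: hB. Qed.

Lemma subringM S x y : is_subring S -> S x -> S y -> S (x * y).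
Proof. by case=> _ _ hM; apply: hM. Qed.

Lemma subring0 S : is_subring S -> S 0.
Proof. by move=> hS; rewrite -(subrr 1); apply: subringB (subring1 hS) (subring1 hS). Qed.

Lemma subringN S x : is_subring S -> S x -> S (- x).
Proof. by move=> hS hx; rewrite -sub0r; apply: subringB (subring0 hS) hx. Qed.

Lemma subringD S x y : is_subring S -> S x -> S y -> S (x + y).
Proof. by move=> hS hx hy; rewrite -[y]opprK; apply: subringB (subringN hS hy). Qed.

Lemma subringX S x n : is_subring S -> S x -> S (x ^+ n).
Proof.
move=> hS hx; elim: n => [|n IH]; first by rewrite expr0; exact: subring1.
by rewrite exprS; exact: subringM.
Qed.

Lemma subringT : is_subring (fun _ : B => True).
Proof. by []. Qed.

Lemma ideal_sub S I x : is_ideal S I -> I x -> S x.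
Proof. by case=> h _ _ _; apply: h. Qed.

Lemma ideal0 S I : is_ideal S I -> I 0.
Proof. by case. Qed.

Lemma idealD S I x y : is_ideal S I -> I x -> I y -> I (x + y).
Proof. by case=> _ _ h _; apply: h. Qed.

Lemma idealMl S I s x : is_ideal S I -> S s -> I x -> I (s * x).
Proof. by case=> _ _ _ h; apply: h. Qed.

Lemma idealN S I x : is_subring S -> is_ideal S I -> I x -> I (- x).
Proof. by move=> hS hI hx; rewrite -mulN1r; exact: idealMl hI (subringN hS (subring1 hS)) hx. Qed.

Lemma idealB S I x y : is_subring S -> is_ideal S I -> I x -> I y -> I (x - y).
Proof. by move=> hS hI hx hy; apply: idealD hI hx (idealN hS hI hy). Qed.

Lemma ideal_1Bexpr I x n : is_ideal (fun _ => True) I -> I (x - 1) -> I (1 - x ^+ n).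
Proof.
move=> hI Ix1; elim: n => [|n IH]; first by rewrite expr0 subrr; exact: ideal0 hI.
have -> : 1 - x ^+ n.+1 = (1 - x ^+ n) - x ^+ n * (x - 1).
  by rewrite mulrBr mulr1 -exprSr opprB addrA subrK.
exact: idealB subringT hI IH (idealMl hI _ Ix1).
Qed.

Lemma ideal_sum S I n (F : 'I_n -> B) :
  is_ideal S I -> (forall i, I (F i)) -> I (\sum_(i < n) F i).
Proof.
move=> hI hF; apply: (big_ind I) => //; first exact: ideal0 hI.
by move=> x y; apply: idealD hI.
Qed.

Lemma ideal_unit S I x y : is_ideal S I -> I x -> S y -> x * y = 1 -> I 1.
Proof. by move=> hI Ix Sy <-; rewrite mulrC; exact: idealMl hI Sy Ix. Qed.

Definition proper_ideal_above S I X :=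
  [/\ is_ideal S X, (forall x, I x -> X x) & ~ X 1].

Lemma bigcup_chain_proper_ideal S I (F : set (set B)) X0 x0 :
  F `<=` (fun X => X = set0 \/ proper_ideal_above S I X) ->
  total_on F subset -> F X0 -> X0 x0 ->
  proper_ideal_above S I (\bigcup_(X in F) X).
Proof.
move=> FP Ftot FX0 X0x0.
have FI X x : F X -> X x -> proper_ideal_above S I X by move=> /FP [-> []|].
have [hX0 IX0 _] := FI _ _ FX0 X0x0; split.
- split.
  + by move=> x [X FX Xx]; have [hX _ _] := FI _ _ FX Xx; exact: ideal_sub hX Xx.
  + by exists X0 => //; exact: ideal0 hX0.
  + move=> x y [X1 FX1 X1x] [X2 FX2 X2y].
    have [X12|X21] := Ftot _ _ FX1 FX2.
      have [hX _ _] := FI _ _ FX2 X2y.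
      by exists X2 => //; apply: idealD hX (X12 _ X1x) X2y.
    have [hX _ _] := FI _ _ FX1 X1x.
    by exists X1 => //; apply: idealD hX X1x (X21 _ X2y).
  + move=> s x Ss [X FX Xx]; have [hX _ _] := FI _ _ FX Xx.
    by exists X => //; apply: idealMl hX Ss Xx.
- by move=> x Ix; exists X0 => //; apply: IX0.
- by move=> [X FX X1]; have [_ _ hX1] := FI _ _ FX X1.
Qed.

Lemma maximal_ideal_above S I : is_subring S -> is_ideal S I -> ~ I 1 ->
  exists M, is_maximal_ideal S M /\ (forall x, I x -> M x).
Proof.
move=> hS hI hI1.
(* [set0] is admitted so that Zorn also covers the empty chain *)
have [M [PM Mmax]] : exists M, (M = set0 \/ proper_ideal_above S I M) /\
    forall M', M `<` M' -> ~ (M' = set0 \/ proper_ideal_above S I M').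
  apply: Zorn_bigcup => F FP Ftot.
  have [[X0 [FX0 [x0 X0x0]]]|Fnil] := pselect (exists X, F X /\ exists x, X x).
    by right; exact: bigcup_chain_proper_ideal FP Ftot FX0 X0x0.
  by left; apply/predeqP => x; split=> // -[X FX Xx]; apply: Fnil; exists X; split=> //; exists x.
have [hM IM M1] : proper_ideal_above S I M.
  case: PM => [M0|//]; exfalso; apply: (Mmax I); last by right.
  by split; [rewrite M0 | move=> /(_ 0 (ideal0 hI)); rewrite M0].
exists M; split => //; split => // K hK MK.
have [|K1] := pselect (K 1); first by left.
right; have [//|KM] := pselect (forall x, K x -> M x).
by exfalso; apply: (Mmax K); [split | right; split=> // x /IM /MK].
Qed.

Lemma subring_unit_or_maximal S x : is_subring S -> S x ->
  (exists y, S y /\ x * y = 1) \/ (exists M, is_maximal_ideal S M /\ M x).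
Proof.
move=> hS Sx; pose xS z := exists s, S s /\ z = x * s.
have hxS : is_ideal S xS.
  split.
  - by move=> z [s [Ss ->]]; exact: subringM.
  - by exists 0; split; [exact: subring0 | rewrite mulr0].
  - move=> z w [s [Ss ->]] [t [St ->]]; exists (s + t).
    by split; [exact: subringD | rewrite mulrDr].
  - move=> u z Su [s [Ss ->]]; exists (u * s).
    by split; [exact: subringM | rewrite mulrCA].
have [[y [Sy xy]]|xS1] := pselect (xS 1); first by left; exists y.
have [M [hM xSM]] := maximal_ideal_above hS hxS xS1.
by right; exists M; split=> //; apply: xSM; exists 1; rewrite mulr1; split=> //; exact: subring1.
Qed.

Lemma exists_maxB : exists N, maxB N.
Proof.
pose I0 x := x = 0 :> B.
have hI0 : is_ideal (fun _ => True) I0.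
  by split=> // [x y -> ->|s x _ ->]; rewrite ?addr0 ?mulr0.
have I01 : ~ I0 1 by move/eqP; rewrite oner_eq0.
by have [M [hM _]] := maximal_ideal_above subringT hI0 I01; exists M.
Qed.

Lemma maxB_ideal N : maxB N -> is_ideal (fun _ => True) N.
Proof. by case. Qed.

Lemma maxB_proper N : maxB N -> ~ N 1.
Proof. by case. Qed.

Lemma maxB_invertible_mod N a : maxB N -> ~ N a -> exists y, N (a * y - 1).
Proof.
move=> hN Na; have hI := maxB_ideal hN.
pose K z := exists n y, N n /\ z = n + a * y.
have hK : is_ideal (fun _ => True) K.
  split => //.
  - by exists 0, 0; split; [exact: ideal0 hI | rewrite mulr0 addr0].
  - move=> x y [n1 [y1 [N1 ->]]] [n2 [y2 [N2 ->]]]; exists (n1 + n2), (y1 + y2).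
    by split; [exact: idealD hI N1 N2 | rewrite mulrDr addrACA].
  - move=> s x _ [n1 [y1 [N1 ->]]]; exists (s * n1), (s * y1).
    by split; [exact: idealMl hI _ N1 | rewrite mulrDr mulrCA].
have NK x : N x -> K x by move=> Nx; exists x, 0; rewrite mulr0 addr0.
case: hN => _ _ /(_ K hK NK) [[n [y [Nn n_ay]]]|KN]; last first.
  by case: Na; apply: KN; exists 0, 1; split; [exact: ideal0 hI | rewrite mulr1 add0r].
exists y; have -> : a * y - 1 = - n by rewrite n_ay opprD addrCA subrr addr0.
exact: idealN subringT hI Nn.
Qed.

Lemma local_ideal_sub S mS I : is_local S mS -> is_ideal S I -> ~ I 1 ->
  forall x, I x -> mS x.
Proof.
case=> hS _ hall hI hI1 x Ix.
have [M [hM IM]] := maximal_ideal_above hS hI hI1.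
exact/(hall M hM)/IM.
Qed.

Lemma local_unit S mS x : is_local S mS -> S x -> ~ mS x ->
  exists y, S y /\ x * y = 1.
Proof.
move=> hl Sx mx; have [hS _ hall] := hl.
have [//|[M [hM Mx]]] := subring_unit_or_maximal hS Sx.
by case: mx; apply/(hall M hM).
Qed.

Lemma local_of_units S I : is_subring S -> is_ideal S I -> ~ I 1 ->
  (forall x, S x -> ~ I x -> exists y, S y /\ x * y = 1) -> is_local S I.
Proof.
move=> hS hI I1 units.
have proper_sub K : is_ideal S K -> ~ K 1 -> forall x, K x -> I x.
  move=> hK K1 x Kx; have [//|Ix] := pselect (I x).
  have [y [Sy xy]] := units x (ideal_sub hK Kx) Ix.
  by case: K1; exact: ideal_unit hK Kx Sy xy.
have hImax : is_maximal_ideal S I.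
  split => // K hK _; have [|K1] := pselect (K 1); [by left | right].
  exact: proper_sub.
split => // n [hn n1 nmax] x; have nI := proper_sub n hn n1.
split; first exact: nI.
by case: (nmax I hI nI) => [/I1|] //; apply.
Qed.

Lemma integral_over_sub A C : (forall x, A x -> C x) ->
  integral_over A -> integral_over C.
Proof. by move=> sAC hint b; have [p [pm pA pb]] := hint b; exists p; split=> // i; apply: sAC. Qed.

Lemma sum_pred_l S I x : I 0 -> S x -> sum_pred S I x.
Proof. by move=> I0 Sx; exists x, 0; rewrite addr0. Qed.

Lemma sum_pred_r S I x : S 0 -> I x -> sum_pred S I x.
Proof. by move=> S0 Ix; exists 0, x; rewrite add0r. Qed.

Lemma subring_sum_ideal S I : is_subring S -> is_ideal (fun _ => True) I ->
  is_subring (sum_pred S I).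
Proof.
move=> hS hI; split.
- exact: sum_pred_l (ideal0 hI) (subring1 hS).
- move=> _ _ [a1 [r1 [S1 I1 ->]]] [a2 [r2 [S2 I2 ->]]].
  exists (a1 - a2), (r1 - r2); rewrite opprD addrACA.
  by split; [exact: subringB | exact: idealB subringT hI I1 I2 |].
- move=> _ _ [a1 [r1 [S1 I1 ->]]] [a2 [r2 [S2 I2 ->]]].
  exists (a1 * a2), (a1 * r2 + a2 * r1 + r1 * r2); split.
  + exact: subringM.
  + have Ir s r : I r -> I (s * r) by exact: idealMl hI _.
    exact: idealD hI (idealD hI (Ir _ _ I2) (Ir _ _ I1)) (Ir _ _ I2).
  + by ring.
Qed.

Notation J := (jacobson_radical (B:=B)).

Lemma jacobson_ideal : is_ideal (fun _ => True) J.
Proof.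
split=> //.
- by move=> N /maxB_ideal/ideal0.
- by move=> x y Jx Jy N hN; apply: idealD (maxB_ideal hN) (Jx N hN) (Jy N hN).
- by move=> s x _ Jx N hN; apply: idealMl (maxB_ideal hN) _ (Jx N hN).
Qed.

Lemma jacobson_proper : ~ J 1.
Proof. by have [N hN] := exists_maxB => /(_ N hN); exact: maxB_proper. Qed.

Lemma jacobson_unit1D r : J r -> exists v, (1 + r) * v = 1.
Proof.
move=> Jr; have [[v [_ rv]]|[M [hM M1r]]] := subring_unit_or_maximal (x := 1 + r) subringT Logic.I;
  first by exists v.
case: (maxB_proper hM).
by have := idealB subringT (maxB_ideal hM) M1r (Jr M hM); rewrite addrK.
Qed.

End SubringsIdeals.

Lemma homog_horner (B : comNzRingType) (p : {poly B}) (a y : B) :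
  a ^+ (size p).-1 * p.[y] =
  \sum_(i < size p) p`_i * a ^+ ((size p).-1 - i) * (a * y) ^+ i.
Proof.
rewrite horner_coef mulr_sumr; apply: eq_bigr => i _.
have le_i_d : (i <= (size p).-1)%N by rewrite -ltnS prednK // (leq_ltn_trans _ (ltn_ord i)).
by rewrite -{1}(subnK le_i_d) exprD exprMn; ring.
Qed.

Section LyingOver.
Variables (B : comNzRingType) (S mS : B -> Prop).
Hypothesis hloc : is_local S mS.

Lemma local_homog_unit (p : {poly B}) a : p \is monic -> (forall i, S p`_i) -> mS a ->
  exists u, S u /\ (\sum_(i < size p) p`_i * a ^+ ((size p).-1 - i)) * u = 1.
Proof.
move=> pm pS ma; have [hS [hm m1 _] _] := hloc.
have sz : size p = (size p).-1.+1 by rewrite prednK // size_poly_gt0 monic_neq0.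
move: (monicP pm); rewrite lead_coefE; move: sz; set d := (size p).-1 => sz pd.
rewrite sz big_ord_recr /= subnn expr0 mulr1 pd.
set s := \sum_(i < d) _.
have ms : mS s.
  apply: (ideal_sum hm) => i; rewrite -(subnSK (ltn_ord i)) exprSr mulrA.
  exact: (idealMl hm (subringM hS (pS _) (subringX _ hS (ideal_sub hm ma))) ma).
apply: (local_unit hloc).
  exact: subringD hS (ideal_sub hm ms) (subring1 hS).
by move=> ms1; apply: m1; have := idealB hS hm ms1 ms; rewrite addrAC subrr add0r.
Qed.

Lemma maxB_homog N (p : {poly B}) a y : maxB N -> N (a * y - 1) -> root p y ->
  N (\sum_(i < size p) p`_i * a ^+ ((size p).-1 - i)).
Proof.
move=> hN ay1 py; have hI := maxB_ideal hN.
have -> : \sum_(i < size p) p`_i * a ^+ ((size p).-1 - i) =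
    \sum_(i < size p) p`_i * a ^+ ((size p).-1 - i) - a ^+ (size p).-1 * p.[y].
  by rewrite (rootP py) mulr0 subr0.
rewrite homog_horner -sumrB; apply: (ideal_sum hI) => i.
rewrite -[X in X - _]mulr1 -mulrBr.
exact: idealMl hI _ (ideal_1Bexpr _ hI ay1).
Qed.

Lemma maxB_contract N a : integral_over S -> maxB N -> S a -> (N a <-> mS a).
Proof.
move=> hint hN Sa; have hI := maxB_ideal hN; have [hS _ _] := hloc.
split=> [Na | ma].
  have hSN : is_ideal S (fun x => S x /\ N x).
    split.
    - by move=> x [].
    - by split; [exact: subring0 | exact: ideal0 hI].
    - by move=> x y [Sx Nx] [Sy Ny]; split; [exact: subringD | exact: idealD hI Nx Ny].
    - by move=> s x Ss [Sx Nx]; split; [exact: subringM | exact: idealMl hI _ Nx].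
  by apply: local_ideal_sub hloc hSN _ _ _ => // -[_ /(maxB_proper hN)].
have [//|Na] := pselect (N a).
have [y ay1] := maxB_invertible_mod hN Na.
have [p [pm pS py]] := hint y.
have [u [_ tu]] := local_homog_unit pm pS ma.
by case: (maxB_proper hN); exact: ideal_unit hI (maxB_homog hN ay1 py) _ tu.
Qed.

End LyingOver.

Section SumJacobson.
Variables (B : comNzRingType) (A m : B -> Prop).
Hypotheses (hAloc : is_local A m) (hint : integral_over A).
Local Notation J := (jacobson_radical (B:=B)).
Local Notation A' := (sum_pred A J).

Let hA : is_subring A. Proof. by case: hAloc. Qed.
Let hm : is_ideal A m. Proof. by case: hAloc => _ []. Qed.

Lemma jacobson_contract a : A a -> (J a <-> m a).
Proof.
move=> Aa; split=> [Ja | ma N hN]; last exact/(maxB_contract hAloc hint hN Aa).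
have [N hN] := exists_maxB B.
exact/(maxB_contract hAloc hint hN Aa)/(Ja N hN).
Qed.

Lemma sum_jacobson_subring : is_subring A'.
Proof. exact: subring_sum_ideal hA (jacobson_ideal B). Qed.

Lemma sum_jacobson_unit x : A' x -> ~ J x -> exists y, A' y /\ x * y = 1.
Proof.
have hJ := jacobson_ideal B.
move=> [a [r [Aa Jr ->]]] Jar.
have ma : ~ m a by move/(jacobson_contract Aa) => Ja; apply: Jar; exact: idealD hJ Ja Jr.
have [u [Au au]] := local_unit hAloc Aa ma.
have Jur : J (u * r) by exact: idealMl hJ _ Jr.
have [v uv] := jacobson_unit1D Jur.
exists (u * v); split; last by rewrite mulrA mulrDl au (mulrC r u).
apply: (subringM sum_jacobson_subring); first exact: sum_pred_l (ideal0 hJ) Au.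
have -> : v = 1 - u * r * v by rewrite -uv mulrDl mul1r addrK.
have Jurv : J (u * r * v) by rewrite mulrC; exact: idealMl hJ _ Jur.
exists 1, (- (u * r * v)); split=> //; first exact: subring1.
by rewrite -mulN1r; exact: idealMl hJ _ Jurv.
Qed.

Lemma sum_jacobson_local : is_local A' J.
Proof.
have hJ := jacobson_ideal B.
apply: local_of_units sum_jacobson_subring _ (@jacobson_proper B) sum_jacobson_unit.
have [_ J0 JD JM] := hJ; split=> // [x Jx|s x _ Jx].
  exact: sum_pred_r (subring0 hA) Jx.
exact: JM.
Qed.

Lemma sum_jacobson_residue_iso : canonical_residue_iso A m A' J.
Proof.
split=> [a Aa /(jacobson_contract Aa)//|a Aa /(jacobson_contract Aa)//|].
by move=> _ [a [r [Aa Jr ->]]]; exists a; rewrite addrAC subrr add0r.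
Qed.

Lemma sum_jacobson_largest C n : (forall x, A x -> C x) ->
  is_local C n -> canonical_residue_iso A m C n -> forall x, C x -> A' x.
Proof.
move=> AC hC [_ _ residue_surj] x Cx.
have [hCs _ _] := hC.
have [a [Aa nxa]] := residue_surj x Cx.
have Cxa : C (x - a) by apply: subringB hCs Cx (AC _ Aa).
exists a, (x - a); split=> //; last by rewrite addrC subrK.
move=> N hN; exact/(maxB_contract hC (integral_over_sub AC hint) hN Cxa).
Qed.

Lemma sum_jacobsonP b : A' b <->
  ((forall ni, maxB ni -> exists a, A a /\ ni (b - a)) /\
   (forall ni nj ai aj, maxB ni -> maxB nj -> A ai -> A aj ->
      ni (b - ai) -> nj (b - aj) -> m (ai - aj))).
Proof.
have contract N a : maxB N -> A a -> (N a <-> m a) := maxB_contract hAloc hint.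
split=> [[a0 [r [Aa0 Jr ->]]]|[residue_at agree]].
  split=> [ni hni|ni nj ai aj hni hnj Aai Aaj ni_b nj_b].
    by exists a0; split=> //; rewrite addrAC subrr add0r; apply: Jr.
  have m_a0B N c : maxB N -> A c -> N (a0 + r - c) -> m (a0 - c).
    move=> hN Ac Nc; apply/(contract N _ hN (subringB hA Aa0 Ac)).
    have -> : a0 - c = a0 + r - c - r by rewrite addrAC addrK.
    exact: idealB (@subringT B) (maxB_ideal hN) Nc (Jr N hN).
  have := idealB hA hm (m_a0B _ _ hnj Aaj nj_b) (m_a0B _ _ hni Aai ni_b).
  by rewrite opprB addrC addrA subrK addrC.
have [N0 hN0] := exists_maxB B.
have [a0 [Aa0 N0b]] := residue_at N0 hN0.
exists a0, (b - a0); split=> //; last by rewrite addrC subrK.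
move=> N hN; have [aN [AaN Nb]] := residue_at N hN.
have Na : N (aN - a0).
  exact/(contract N _ hN (subringB hA AaN Aa0))/(agree N N0 aN a0 hN hN0 AaN Aa0 Nb N0b).
have -> : b - a0 = (b - aN) + (aN - a0) by rewrite addrA subrK.
exact: idealD (maxB_ideal hN) Nb Na.
Qed.

End SumJacobson.

Theorem mainTheorem1 (B : comNzRingType) (A m : B -> Prop)
  (hAloc : is_local A m) (hint : integral_over A) :
  let A' := sum_pred A (jacobson_radical (B:=B)) in
  let m' := jacobson_radical (B:=B) in
  (* (1) *)
  (is_local A' m' /\ canonical_residue_iso A m A' m') /\
  (* (2) *)
  (forall C n : B -> Prop,
     (forall x, A x -> C x) ->
     is_local C n -> canonical_residue_iso A m C n ->
     forall x, C x -> A' x) /\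
  (* (3) *)
  (forall b : B, A' b <->
     ((forall ni, maxB ni -> exists a, A a /\ ni (b - a)) /\
      (forall ni nj ai aj, maxB ni -> maxB nj -> A ai -> A aj ->
         ni (b - ai) -> nj (b - aj) -> m (ai - aj)))).
Proof.
move=> A' m'; split; first split.
- exact: sum_jacobson_local hAloc hint.
- exact: sum_jacobson_residue_iso hAloc hint.
split.
- exact: sum_jacobson_largest hint.
- exact: sum_jacobsonP hAloc hint.
Qed.
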